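(* Let $\mathcal{H}_A\cong\mathcal{H}_B\cong\mathbb{C}^d$ and let $|\Psi\rangle_{AB}$ be a pure state with Schmidt probabilities $p_1,\dots,p_d$ (i.e. $|\Psi\rangle=\sum_i\sqrt{p_i}|\psi_i\rangle_A|\phi_i\rangle_B$ for orthonormal bases $\{\psi_i\},\{\phi_i\}$), and $\Lambda=\mathrm{diag}(p_1,\dots,p_d)$. Let $t\ge2$, $\pi,\sigma\in S_t$, $\beta=\sigma\pi^{-1}$, and let $\xi_1,\dots,\xi_k$ be the cycle lengths of $\beta$ ($k=\#\mathrm{cycles}(\beta)$). Then $$\mathrm{Tr}[(W^A_\pi\otimes W^B_\sigma)\Psi^{\otimes t}]=\prod_{l=1}^{k}\mathrm{Tr}[\Lambda^{\xi_l}]=:\chi(\Psi,\beta),$$ and moreover $d_0(\Psi)^{k-t}\le\chi(\Psi,\beta)\le d_t(\Psi)^{k-t}$, where $d_\alpha(\Psi)=2^{S_\alpha(\Psi)}$.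
   Context: $\Psi=|\Psi\rangle\langle\Psi|$. $W_\pi$ is the operator permuting the $t$ tensor factors; $(\mathcal{H}_A\otimes\mathcal{H}_B)^{\otimes t}\cong\mathcal{H}_A^{\otimes t}\otimes\mathcal{H}_B^{\otimes t}$. The Rényi entropies of the Schmidt distribution are $S_\alpha(\Psi)=\frac{1}{1-\alpha}\log_2\sum_i p_i^\alpha$ for $\alpha>0$, $\alpha\neq1$, and $S_0(\Psi)=\log_2$ of the Schmidt rank (number of nonzero $p_i$), so $d_0(\Psi)$ is the Schmidt rank. *)

From HB Require Import structures.
From mathcomp Require Import all_boot all_order all_algebra all_fingroup.
From mathcomp Require Import complex.
From mathcomp Require Import all_classical all_reals all_analysis.

Set Implicit Arguments.
Unset Strict Implicit.
Unset Printing Implicit Defensive.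

Import Order.TTheory GRing.Theory Num.Theory ComplexField.
Local Open Scope ring_scope.

Section QDefs.
Variables (R : realType) (d t : nat).
Local Notation C := (R[i]).

(* basis index of H^{(x) t} with H = C^d : strings x_1 ... x_t *)
Definition tstring := {ffun 'I_t -> 'I_d}.

(* Matrix element <a'| W_pi |a> of the operator permuting the t tensor
   factors: W_pi |x_1..x_t> = |x_{pi^-1(1)} .. x_{pi^-1(t)}>. *)
Definition Wperm (pi : 'S_t) (a' a : tstring) : C :=
  (a' == [ffun s => a ((pi^-1)%g s)])%:R.

(* (H_A (x) H_B)^{(x) t} ~ H_A^{(x) t} (x) H_B^{(x) t}: basis indexed by pairs
   of strings.  Matrix element of W^A_pi (x) W^B_sigma. *)
Definition WAB (pi sigma : 'S_t) (x y : tstring * tstring) : C :=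
  Wperm pi x.1 y.1 * Wperm sigma x.2 y.2.

(* amplitudes of |Psi>^{(x) t}, for Psi given by its amplitudes Psi a b
   = <a|_A <b|_B |Psi> *)
Definition tensor_amp (Psi : 'I_d -> 'I_d -> C) (x : tstring * tstring) : C :=
  \prod_(s < t) Psi (x.1 s) (x.2 s).

(* matrix element <x| Psi^{(x) t} |y> of the projector (|Psi><Psi|)^{(x) t} *)
Definition tensor_proj (Psi : 'I_d -> 'I_d -> C) (x y : tstring * tstring) : C :=
  tensor_amp Psi x * (tensor_amp Psi y)^*.

Definition tr_WPsi (pi sigma : 'S_t) (Psi : 'I_d -> 'I_d -> C) : C :=
  \sum_(x : tstring * tstring) \sum_(y : tstring * tstring)
     WAB pi sigma x y * tensor_proj Psi y x.

End QDefs.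

Section Entropy.
Variable R : realType.

Definition log2 (x : R) : R := ln x / ln 2.

Definition renyi (d : nat) (alpha : R) (p : 'I_d -> R) : R :=
  if alpha == 0 then log2 (#|[set i | p i != 0]|%:R)
  else if alpha == 1 then - \sum_(i < d) p i * log2 (p i)
  else (1 - alpha)^-1 * log2 (\sum_(i < d) p i `^ alpha).

Definition deff (d : nat) (alpha : R) (p : 'I_d -> R) : R :=
  2 `^ renyi alpha p.

End Entropy.

From HB Require Import structures.
From mathcomp Require Import all_boot all_order all_algebra all_fingroup.
From mathcomp Require Import complex.
From mathcomp Require Import all_classical all_reals all_analysis.
From mathcomp Require Import ring lra.
Import Order.TTheory GRing.Theory Num.Theory ComplexField.
Local Open Scope ring_scope.

Set Implicit Arguments.
Unset Strict Implicit.

(* Expanding Psi in its Schmidt basis, orthonormality of the psi_i and phi_i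
   collapses the trace to a sum over colourings g of the t tensor factors by
   Schmidt indices with g o pi = g o sigma, i.e. colourings constant on the
   cycles of beta; such a colouring contributes prod_s p_(g s), and summing
   cycle by cycle gives prod_l Tr Lambda^(xi_l).
   For the bounds let S n = Tr Lambda^n.  Chebyshev's sum inequality gives
   S (n+1)^2 <= S n * S (n+2), so ln S is convex with ln S 1 = 0 and
   ln S n / (n - 1) increases up to its value -ln d_t at n = t; it also gives
   S (n+1) <= r * S (n+2) for the Schmidt rank r = d_0, so S n >= r^(1-n).
   Multiplying over the k cycles, whose lengths sum to t, yields
   d_0^(k-t) <= chi <= d_t^(k-t). *)

Section Chebyshev.
Variables (R : realFieldType) (I : finType) (P : pred I) (w a b : I -> R).

Lemma chebyshev_sum_identity :
  \sum_(i | P i) \sum_(j | P j) w i * w j * ((a i - a j) * (b i - b j)) =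
  ((\sum_(i | P i) w i) * (\sum_(i | P i) w i * a i * b i)
   - (\sum_(i | P i) w i * a i) * (\sum_(i | P i) w i * b i)) *+ 2.
Proof.
have expand i j : w i * w j * ((a i - a j) * (b i - b j)) =
    w j * (w i * a i * b i) + w i * (w j * a j * b j)
    - (w i * a i * (w j * b j) + w j * a j * (w i * b i)).
  by ring.
under eq_bigr do under eq_bigr do rewrite expand.
under eq_bigr do rewrite sumrB !big_split /= -!mulr_sumr -!mulr_suml.
by rewrite sumrB !big_split /= -!mulr_suml -!mulr_sumr; ring.
Qed.

Lemma chebyshev_sum :
  (forall i, P i -> 0 <= w i) ->
  (forall i j, P i -> P j -> 0 <= (a i - a j) * (b i - b j)) ->
  (\sum_(i | P i) w i * a i) * (\sum_(i | P i) w i * b i) <=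
  (\sum_(i | P i) w i) * (\sum_(i | P i) w i * a i * b i).
Proof.
move=> w_ge0 ab_ge0.
have : 0 <= \sum_(i | P i) \sum_(j | P j) w i * w j * ((a i - a j) * (b i - b j)).
  apply: sumr_ge0 => i Pi; apply: sumr_ge0 => j Pj.
  by apply: mulr_ge0; [apply: mulr_ge0; apply: w_ge0 | apply: ab_ge0].
by rewrite chebyshev_sum_identity pmulrn_lge0 // subr_ge0.
Qed.

End Chebyshev.

Section ConvexSequence.
Variables (R : realFieldType) (g : nat -> R).
Hypotheses (g1 : g 1 = 0) (g_convex : forall m, g m.+1 *+ 2 <= g m + g m.+2).

Lemma convex_seq_slope_succ n : (n%:R + 1) * g n.+1 <= n%:R * g n.+2.
Proof.
elim: n => [|n IH]; first by rewrite g1 mulr0 mul0r.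
have := g_convex n.+1; rewrite -natr1 -mulr_natr => conv.
have n_ge0 : 0 <= n%:R :> R by [].
nra.
Qed.

Lemma convex_seq_slope n m : (1 <= n <= m)%N -> (m%:R - 1) * g n <= (n%:R - 1) * g m.
Proof.
case/andP=> n_gt0; elim: m => [|m IH]; first by rewrite leqn0 => /eqP n0; rewrite n0 in n_gt0.
rewrite leq_eqVlt => /orP[/eqP-> // | n_le_m]; have {}IH := IH n_le_m.
case: m n_le_m IH => [|[|m]] n_le_m IH; first by rewrite ltnS leqNgt n_gt0 in n_le_m.
  have -> : n = 1%N by apply/eqP; rewrite eqn_leq -ltnS n_le_m.
  by rewrite g1 subrr !mul0r mulr0.
have IH' := ler_wpM2l (ler0n _ m.+2) IH.
have n1_ge0 : 0 <= n%:R - 1 :> R by rewrite subr_ge0 ler1n.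
have slope := ler_wpM2l n1_ge0 (convex_seq_slope_succ m.+1).
have m_gt0 : 0 < m.+1%:R :> R by rewrite ltr0n.
rewrite -!natr1 in IH' slope *.
nra.
Qed.

End ConvexSequence.

Lemma ln_prod (R : realType) (I : finType) (P : pred I) (F : I -> R) :
  (forall i, P i -> 0 < F i) -> ln (\prod_(i | P i) F i) = \sum_(i | P i) ln (F i).
Proof.
move=> F_gt0.
suff [] : 0 < \prod_(i | P i) F i /\ ln (\prod_(i | P i) F i) = \sum_(i | P i) ln (F i) by [].
elim/big_rec2: _ => [|i x y Pi [y_gt0 <-]]; first by rewrite ln1.
by rewrite mulr_gt0 ?F_gt0 // lnM ?posrE ?F_gt0.
Qed.

Definition power_sum {R : pzSemiRingType} {I : finType} (p : I -> R) (n : nat) : R :=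
  \sum_(i : I) p i ^+ n.

Section PowerSumInequalities.
Variables (R : realFieldType) (I : finType) (p : I -> R).
Hypothesis p_ge0 : forall i, 0 <= p i.
Local Notation S := (power_sum p).
Local Notation supp := [set i | p i != 0].

Lemma power_sum_log_convex m : S m.+1 ^+ 2 <= S m * S m.+2.
Proof.
have := @chebyshev_sum _ _ predT (fun i => p i ^+ m) p p.
rewrite /power_sum expr2.
under eq_bigr do rewrite -exprSr.
under [X in _ <= _ * X]eq_bigr do rewrite -exprSr -exprSr.
apply=> [i _|i j _ _]; first exact: exprn_ge0.
by rewrite -expr2 sqr_ge0.
Qed.

Lemma power_sum_supp n : S n.+1 = \sum_(i in supp) p i ^+ n.+1.
Proof.
rewrite /power_sum (bigID (mem supp)) /= [X in _ + X]big1 ?addr0 // => i.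
by rewrite inE negbK => /eqP ->; rewrite expr0n.
Qed.

Lemma power_sum_le_card_supp n : S 1 * S n.+1 <= #|supp|%:R * S n.+2.
Proof.
rewrite !power_sum_supp -sumr_const.
under eq_bigr do rewrite expr1 -[p _]mul1r.
under [X in _ * X <= _]eq_bigr do rewrite -[p _ ^+ _]mul1r.
under [X in _ <= _ * X]eq_bigr do rewrite exprS -[X in X * _]mul1r.
apply: chebyshev_sum => // i j _ _.
case: (lerP (p i) (p j)) => pij.
  by rewrite -mulrNN !opprB; apply: mulr_ge0; rewrite subr_ge0 ?ler_pXn2r ?nnegrE.
by apply: mulr_ge0; rewrite subr_ge0 ?ler_pXn2r ?nnegrE ?(ltW pij).
Qed.

End PowerSumInequalities.

Section LogPowerSum.
Variables (R : realType) (I : finType) (p : I -> R).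
Hypotheses (p_ge0 : forall i, 0 <= p i) (p_sum1 : \sum_i p i = 1).
Local Notation S := (power_sum p).
Local Notation supp := [set i | p i != 0].

Lemma power_sum1 : S 1 = 1.
Proof. by rewrite /power_sum; under eq_bigr do rewrite expr1. Qed.

Lemma exists_prob_gt0 : exists i, 0 < p i.
Proof.
apply/existsP; apply: contraT; rewrite negb_exists => /forallP p_le0.
move: p_sum1; rewrite big1 => [/eqP|i _]; first by rewrite eq_sym oner_eq0.
by apply/eqP; rewrite eq_le p_ge0 andbT leNgt p_le0.
Qed.

Lemma power_sum_gt0 n : 0 < S n.
Proof.
have [i pi_gt0] := exists_prob_gt0.
rewrite /power_sum (bigD1 i) //= ltr_pwDl ?exprn_gt0 //.
by apply: sumr_ge0 => j _; rewrite exprn_ge0.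
Qed.

Lemma card_supp_gt0 : 0 < #|supp|%:R :> R.
Proof.
have [i pi_gt0] := exists_prob_gt0.
by rewrite ltr0n card_gt0; apply/set0Pn; exists i; rewrite inE gt_eqF.
Qed.

Lemma ln_power_sum_ge n : - (n%:R * ln #|supp|%:R) <= ln (S n.+1).
Proof.
elim: n => [|n IH]; first by rewrite mul0r oppr0 power_sum1 ln1.
have := power_sum_le_card_supp p_ge0 n; rewrite power_sum1 mul1r.
rewrite -ler_ln ?posrE ?mulr_gt0 ?power_sum_gt0 ?card_supp_gt0 //.
rewrite lnM ?posrE ?power_sum_gt0 ?card_supp_gt0 // -natr1.
lra.
Qed.

Lemma ln_power_sum_slope n m :
  (1 <= n <= m)%N -> (m%:R - 1) * ln (S n) <= (n%:R - 1) * ln (S m).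
Proof.
apply: (convex_seq_slope (g := fun n => ln (S n))); first by rewrite /= power_sum1 ln1.
move=> k /=; rewrite -lnXn ?power_sum_gt0 // -lnM ?posrE ?power_sum_gt0 //.
by rewrite ler_ln ?posrE ?exprn_gt0 ?mulr_gt0 ?power_sum_gt0 // power_sum_log_convex.
Qed.

End LogPowerSum.

Section PermutationCycles.
Variables (T : finType) (s : {perm T}).

Lemma porbits_eq_mem c x : c \in porbits s -> (porbit s x == c) = (x \in c).
Proof. by case/imsetP=> y _ ->; rewrite eq_porbit_mem. Qed.

Lemma mem_porbits x : porbit s x \in porbits s.
Proof. exact: imset_f. Qed.

Lemma card_porbits_gt0 c : c \in porbits s -> (0 < #|c|)%N.
Proof. by case/imsetP=> x _ ->; rewrite lt0n card_porbit_neq0. Qed.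

Lemma sum_card_porbits : (\sum_(c in porbits s) #|c|)%N = #|T|.
Proof.
rewrite -sum1_card (partition_big (porbit s) (mem (porbits s))) => [|x _]; last exact: mem_porbits.
apply: eq_bigr => c s_c; rewrite sum1_card.
by apply: eq_card => x; rewrite -porbits_eq_mem.
Qed.

Lemma prodr_porbit (K : comPzSemiRingType) (F : {set T} -> K) :
  \prod_x F (porbit s x) = \prod_(c in porbits s) F c ^+ #|c|.
Proof.
rewrite (partition_big (porbit s) (mem (porbits s))) => [|x _]; last exact: mem_porbits.
apply: eq_bigr => c s_c; rewrite (eq_bigr (fun=> F c)) => [|x /eqP-> //].
rewrite prodr_const; congr (_ ^+ _).
by apply: eq_card => x; exact: porbits_eq_mem.
Qed.

Lemma sum_porbit_invariant (K : comPzSemiRingType) (I : finType) (q : I -> K) (i0 : I) :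
  \sum_(g : {ffun T -> I} | [forall x, g (s x) == g x]) \prod_x q (g x) =
  \prod_(c in porbits s) power_sum q #|c|.
Proof.
rewrite /power_sum (big_distr_big i0) /=.
pose lift (f : {ffun {set T} -> I}) := [ffun x => f (porbit s x)].
pose restrict (g : {ffun T -> I}) := [ffun c : {set T} =>
  if c \in porbits s then if [pick x in c] is Some x then g x else i0 else i0].
have pickP_porbit c : c \in porbits s -> exists2 x, [pick x in c] = Some x & porbit s x = c.
  move=> s_c; case: pickP => [x c_x | c0]; first by exists x; last by apply/eqP; rewrite porbits_eq_mem.
  by case/imsetP: s_c c0 => y _ -> /(_ y); rewrite porbit_id.
rewrite (reindex_onto lift restrict) => [|g /forallP g_inv]; last first.
  apply/ffunP=> x; rewrite !ffunE mem_porbits.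
  have [y -> /eqP] := pickP_porbit _ (mem_porbits x).
  rewrite eq_porbit_mem => /porbitP[n ->].
  elim: n => [|n IH]; first by rewrite perm1.
  by rewrite expgSr permM (eqP (g_inv _)).
apply: eq_big => [f | f _]; last first.
  by rewrite -prodr_porbit; apply: eq_bigr => x _; rewrite ffunE.
have -> : [forall x, lift f (s x) == lift f x].
  by apply/forallP=> x; rewrite !ffunE -{2}(expg1 s) porbit_perm.
apply/eqP/pffun_onP=> [f_eq | [/fintype.subsetP f_supp _]].
  split=> //; apply/fintype.subsetP=> c; rewrite !inE -f_eq ffunE.
  by case: (c \in porbits s); rewrite ?eqxx.
apply/ffunP=> c; rewrite ffunE; case: ifP => [s_c | s'c].
  by have [x -> <-] := pickP_porbit _ s_c; rewrite ffunE.
by apply/esym/eqP; apply: contraFT s'c => fc; apply: f_supp; rewrite inE.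
Qed.

End PermutationCycles.

Section CycleProducts.
Variables (R : realType) (I : finType) (p : I -> R).
Hypotheses (p_ge0 : forall i, 0 <= p i) (p_sum1 : \sum_i p i = 1).
Variables (T : finType) (s : {perm T}).
Local Notation S := (power_sum p).
Local Notation k := #|porbits s|.

Lemma sum_porbits_card_sub1 : \sum_(c in porbits s) (#|c|%:R - 1) = #|T|%:R - k%:R :> R.
Proof. by rewrite sumrB -natr_sum sum_card_porbits sumr_const. Qed.

Lemma ln_prod_power_sum_porbits_ge :
  (k%:R - #|T|%:R) * ln #|[set i | p i != 0]|%:R <= ln (\prod_(c in porbits s) S #|c|).
Proof.
rewrite ln_prod => [|c _]; last exact: power_sum_gt0.
rewrite -opprB -sum_porbits_card_sub1 mulNr mulr_suml -sumrN; apply: ler_sum => c s_c.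
case: #|c| (card_porbits_gt0 s_c) => // n _.
by rewrite -natr1 addrK; exact: ln_power_sum_ge.
Qed.

Lemma ln_prod_power_sum_porbits_le :
  (#|T|%:R - 1) * ln (\prod_(c in porbits s) S #|c|) <= (#|T|%:R - k%:R) * ln (S #|T|).
Proof.
rewrite ln_prod => [|c _]; last exact: power_sum_gt0.
rewrite -sum_porbits_card_sub1 mulr_sumr mulr_suml; apply: ler_sum => c s_c.
by apply: ln_power_sum_slope; rewrite ?(card_porbits_gt0 s_c) ?max_card.
Qed.

End CycleProducts.

Section TensorOverlap.
Variables (C : numClosedFieldType) (T I J : finType) (psi : I -> J -> C).
Hypothesis psi_on : forall i j, \sum_a psi i a * (psi j a)^* = (i == j)%:R.

Lemma sum_prod_orthonormal (f h : {ffun T -> I}) :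
  \sum_(y : {ffun T -> J}) \prod_x (psi (f x) (y x) * (psi (h x) (y x))^*) = (f == h)%:R.
Proof.
rewrite -(bigA_distr_bigA (fun x a => psi (f x) a * (psi (h x) a)^*)) /=.
under eq_bigr do rewrite psi_on.
have [<-|/eqP f'h] := eqVneq f h; first by rewrite big1 // => x _; rewrite eqxx.
have /existsP[x fx'hx] : [exists x, f x != h x].
  by rewrite -negb_forall; apply/forallP=> fh; apply/f'h/ffunP=> x; apply/eqP.
by rewrite (bigD1 x) //= (negPf fx'hx) mul0r.
Qed.

Lemma sum_prod_orthonormal_perm (rho : {perm T}) (f g : {ffun T -> I}) :
  \sum_(y : {ffun T -> J})
    (\prod_x psi (f x) (y x)) * (\prod_x psi (g x) (y ((rho^-1)%g x)))^* =
  (f == [ffun x => g (rho x)])%:R.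
Proof.
rewrite -sum_prod_orthonormal; apply: eq_bigr => y _.
rewrite rmorph_prod [X in _ * X](reindex_inj (@perm_inj _ rho)) -big_split /=.
by apply: eq_bigr => x _; rewrite ffunE permK.
Qed.

End TensorOverlap.

Section SchmidtTrace.
Variables (R : realType) (d t : nat).
Local Notation C := R[i].
Local Notation tstring := (tstring d t).

Lemma tr_WPsiE (pi sigma : 'S_t) (Psi : 'I_d -> 'I_d -> C) :
  tr_WPsi pi sigma Psi = \sum_(y : tstring * tstring) tensor_amp Psi y *
    (tensor_amp Psi ([ffun x => y.1 ((pi^-1)%g x)], [ffun x => y.2 ((sigma^-1)%g x)]))^*.
Proof.
rewrite /tr_WPsi exchange_big; apply: eq_bigr => y _.
rewrite (bigD1 ([ffun x => y.1 ((pi^-1)%g x)], [ffun x => y.2 ((sigma^-1)%g x)])) //=.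
rewrite big1 ?addr0 => [|[x1 x2] /=]; first by rewrite /WAB /Wperm /= !eqxx !mul1r.
by rewrite /WAB /Wperm xpair_eqE negb_and => /orP[] /negPf -> /=; rewrite ?(mul0r, mulr0).
Qed.

Lemma tr_WPsi_schmidt (c : 'I_d -> C) (psi phi : 'I_d -> 'I_d -> C) (pi sigma : 'S_t)
    (j0 : 'I_d) :
  (forall i j, \sum_a psi i a * (psi j a)^* = (i == j)%:R) ->
  (forall i j, \sum_a phi i a * (phi j a)^* = (i == j)%:R) ->
  tr_WPsi pi sigma (fun a b => \sum_i c i * psi i a * phi i b) =
  \prod_(cyc in porbits (pi^-1 * sigma)%g) power_sum (fun i => c i * (c i)^*) #|cyc|.
Proof.
move=> psi_on phi_on; set Psi := fun a b => _.
pose coef (f : tstring) := \prod_x c (f x).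
pose amp (chi : 'I_d -> 'I_d -> C) (f y : tstring) := \prod_x chi (f x) (y x).
have ampE y : tensor_amp Psi y = \sum_f coef f * amp psi f y.1 * amp phi f y.2.
  by rewrite /tensor_amp bigA_distr_bigA; apply: eq_bigr => f _; rewrite -!big_split.
have sum_pairM (A B : tstring -> C) :
    \sum_(y : tstring * tstring) A y.1 * B y.2 = (\sum_y1 A y1) * (\sum_y2 B y2).
  by rewrite big_distrlr pair_bigA.
transitivity (\sum_f \sum_g coef f * (coef g)^* *
    ((f == [ffun x => g (pi x)])%:R * (f == [ffun x => g (sigma x)])%:R)).
  have amp_perm chi f (y : tstring) (rho : 'S_t) :
      amp chi f [ffun x => y ((rho^-1)%g x)] = \prod_x chi (f x) (y ((rho^-1)%g x)).
    by apply: eq_bigr => x _; rewrite ffunE.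
  rewrite tr_WPsiE; under eq_bigr do rewrite !ampE rmorph_sum big_distrlr /=.
  rewrite exchange_big; apply: eq_bigr => f _; rewrite exchange_big; apply: eq_bigr => g _.
  rewrite -(sum_prod_orthonormal_perm psi_on) -(sum_prod_orthonormal_perm phi_on).
  rewrite -sum_pairM mulr_sumr; apply: eq_bigr => y _.
  by rewrite !amp_perm !rmorphM /= /amp; ring.
have coef_perm (g : tstring) (rho : 'S_t) : coef [ffun x => g (rho x)] = coef g.
  by rewrite [RHS](reindex_inj (@perm_inj _ rho)); apply: eq_bigr => x _; rewrite ffunE.
have invariantE (g : tstring) : ([ffun x => g (pi x)] == [ffun x => g (sigma x)]) =
    [forall x, g ((pi^-1 * sigma)%g x) == g x].
  apply/eqP/forallP => [/ffunP g_eq x | g_inv].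
    by move: (g_eq ((pi^-1)%g x)); rewrite !ffunE permKV permM => <-.
  by apply/ffunP=> x; rewrite !ffunE -(eqP (g_inv (pi x))) permM permK.
rewrite exchange_big -(sum_porbit_invariant _ _ j0) [RHS]big_mkcond /=.
apply: eq_bigr => g _; rewrite (bigD1 [ffun x => g (pi x)]) //= big1 => [|f /negPf->]; last first.
  by rewrite mul0r mulr0.
rewrite eqxx mul1r addr0 coef_perm invariantE rmorph_prod -big_split.
by case: ifP; rewrite ?mulr1 ?mulr0.
Qed.

End SchmidtTrace.

Lemma mxtrace_diag_exp (R : comPzRingType) n (v : 'rV[R]_n) k :
  \tr (diag_mx v ^+ k) = \sum_i v 0 i ^+ k.
Proof.
have -> : diag_mx v ^+ k = diag_mx (\row_i v 0 i ^+ k).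
  elim: k => [|k IH]; first by apply/matrixP=> i j; rewrite !mxE expr0.
  by rewrite exprS IH -mulmxE mulmx_diag; congr diag_mx; apply/rowP=> j; rewrite !mxE exprS.
by rewrite mxtrace_diag; apply: eq_bigr => i _; rewrite mxE.
Qed.

Section RenyiPowers.
Variables (R : realType) (d : nat) (p : 'I_d -> R).
Hypotheses (p_ge0 : forall i, 0 <= p i) (p_sum1 : \sum_i p i = 1).

Let ln2_neq0 : ln 2 != 0 :> R.
Proof. by rewrite gt_eqF // ln_gt0 // ltr1n. Qed.

Lemma powR2E x : 2 `^ x = expR (ln 2 * x) :> R.
Proof. by rewrite expRM lnK // posrE. Qed.

Lemma deff0E : deff 0 p = #|[set i | p i != 0]|%:R.
Proof.
by rewrite /deff /renyi eqxx /log2 powR2E mulrC divfK // lnK // posrE card_supp_gt0.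
Qed.

Lemma deff_natE n : (2 <= n)%N -> deff n%:R p = expR (ln (power_sum p n) / (1 - n%:R)).
Proof.
move=> n_ge2; have n_neq1 : 1 - n%:R != 0 :> R by rewrite subr_eq0 eq_sym pnatr_eq1 gtn_eqF.
rewrite /deff /renyi pnatr_eq0 pnatr_eq1 (gtn_eqF (ltnW n_ge2)) (gtn_eqF n_ge2) powR2E.
rewrite /log2 (eq_bigr (fun i => p i ^+ n)) => [|i _]; last by rewrite powR_mulrn.
by congr expR; rewrite /power_sum; field; rewrite n_neq1 ln2_neq0.
Qed.

End RenyiPowers.

Theorem proposition20 (R : realType) (d t : nat)
  (p : 'I_d -> R) (psi phi : 'I_d -> 'I_d -> R[i]) (pi sigma : 'S_t) :
  (2 <= t)%N ->
  (forall i, 0 <= p i) -> \sum_(i < d) p i = 1 ->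
  (* {psi_i} and {phi_i} orthonormal bases of C^d (psi i a = a-th coordinate) *)
  (forall i j, \sum_(a < d) psi i a * (psi j a)^* = (i == j)%:R) ->
  (forall i j, \sum_(a < d) phi i a * (phi j a)^* = (i == j)%:R) ->
  let Psi := fun a b : 'I_d => \sum_(i < d) ((Num.sqrt (p i))%:C)%C * psi i a * phi i b in
  let Lambda := diag_mx (\row_(i < d) p i) in
  let beta := ((pi^-1) * sigma)%g (* = sigma o pi^-1 as functions *) in
  let k := #|porbits beta| in
  let chi := \prod_(c in porbits beta) \tr (Lambda ^+ #|c|) in
  tr_WPsi pi sigma Psi = (chi%:C)%C /\
  deff 0 p `^ (k%:R - t%:R) <= chi /\ chi <= deff t%:R p `^ (k%:R - t%:R).
Proof.
move=> t_ge2 p_ge0 p_sum1 psi_on phi_on Psi Lambda beta k chi.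
have [j0 _] := exists_prob_gt0 p_ge0 p_sum1.
have chiE : chi = \prod_(c in porbits beta) power_sum p #|c|.
  by apply: eq_bigr => c _; rewrite mxtrace_diag_exp; apply: eq_bigr => i _; rewrite mxE.
split.
  rewrite (tr_WPsi_schmidt _ _ _ j0 psi_on phi_on) chiE rmorph_prod.
  apply: eq_bigr => c _; rewrite rmorph_sum; apply: eq_bigr => i _.
  (* [^*] is [Num.conj], which on [R[i]] unfolds to the [conjc] of [conjc_real]. *)
  have conj_real (x : R) : ((x%:C)%C)^* = (x%:C)%C := conjc_real x.
  by rewrite rmorphXn conj_real -rmorphM -expr2 sqr_sqrtr.
have chi_gt0 : 0 < chi.
  by rewrite chiE prodr_gt0 // => c _; apply: power_sum_gt0.
have t_gt1 : 1 < t%:R :> R by rewrite ltr1n.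
have r_gt0 := card_supp_gt0 p_ge0 p_sum1.
rewrite deff0E // deff_natE // -(lnK r_gt0) -!expRM -(lnK chi_gt0) !ler_expR chiE.
split; first by have := ln_prod_power_sum_porbits_ge p_ge0 p_sum1 beta; rewrite card_ord mulrC.
have -> : ln (power_sum p t) / (1 - t%:R) * (k%:R - t%:R) =
    (t%:R - k%:R) * ln (power_sum p t) / (t%:R - 1).
  by field; rewrite subr_eq0 gt_eqF //= subr_eq0 lt_eqF.
rewrite ler_pdivlMr ?subr_gt0 // mulrC.
by have := ln_prod_power_sum_porbits_le p_ge0 p_sum1 beta; rewrite card_ord.
Qed.
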